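(* Let $\mathbb{K}$ be a field of characteristic zero containing all complex roots of unity and $q$ an indeterminate transcendental over $\mathbb{K}$. Let $f_n(q)$ be a $q$-holonomic sequence satisfying a recurrence $\sum_{j=0}^d c_j(q,q^n)f_{n+j}(q)=0$ for all $n\in\mathbb{N}$, with $c_j\in\mathbb{K}[u,v]$ and $c_d\neq0$ (order $d$). Then for any root of unity $\omega\in\mathbb{C}$ of order $m$, the sequence $f_n(\omega q)$ is $q$-holonomic as well and satisfies a recurrence of this form of order at most $m\cdot d$.
   Context: A sequence $f_n(q)$ is $q$-holonomic if it satisfies a nontrivial linear recurrence $\sum_{j=0}^d c_j(q,q^n)f_{n+j}(q)=0$ for all $n\in\mathbb{N}$, with bivariate polynomials $c_j(u,v)\in\mathbb{K}[u,v]$ and $c_d\neq0$. *)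

From HB Require Import structures.
From mathcomp Require Import all_boot all_order all_algebra.
From mathcomp Require Import generic_quotient fraction.
Set Implicit Arguments. Unset Strict Implicit. Unset Printing Implicit Defensive.
Import GRing.Theory.
Local Open Scope ring_scope.

Notation Kq K := {fraction {poly K}}.

(* A bivariate polynomial c(u,v) in K[u,v] is encoded as c : {poly {poly K}},
   the inner variable being u and the outer variable being v.
   [evalq c n] is c(q, q^n) in K(q). *)
Definition evalq (K : fieldType) (c : {poly {poly K}}) (n : nat) : Kq K :=
  (map_poly (fun p : {poly K} => FracField.tofrac p) c).[FracField.tofrac ('X^n : {poly K})].

Definition qrec (K : fieldType) (f : nat -> Kq K) (d : nat)
    (c : nat -> {poly {poly K}}) : Prop :=
  c d != 0 /\ forall n : nat, \sum_(j < d.+1) evalq (c j) n * f (n + j)%N = 0.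

Definition q_holonomic (K : fieldType) (f : nat -> Kq K) : Prop :=
  exists d c, @qrec K f d c.

Definition substq (K : fieldType) (w : K) (x : Kq K) : Kq K :=
  let r := repr x in
  FracField.tofrac (r.1 \Po (w *: 'X)) / FracField.tofrac (r.2 \Po (w *: 'X)).

(* Substituting q := w q in the recurrence gives a recurrence for g_n = f_n(w q) whose
   coefficients are polynomials in y_n = (w q)^n, i.e. an operator L = sum_j A_j(y) S^j in
   the skew polynomial ring K(q)[y]<S> with S y = w q y S.  A nonzero left multiple
   M L = sum_k L_k(y) S^k in which every L_k involves only powers y^(m e) is a recurrence
   in y_n^m = q^(m n), hence in q^n; clearing denominators then gives the claim.  Such an
   M of S-degree at most (m-1) d exists by linear algebra: bounding y-degrees, the
   coefficients of the y^e S^i in M outnumber the linear conditions "the coefficient of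
   y^e S^k in M L vanishes for m not dividing e", and the top S-coefficient of M L is
   the product of those of M and L, so it does not vanish. *)

From HB Require Import structures.
From mathcomp Require Import all_boot all_order all_algebra.
From mathcomp Require Import generic_quotient fraction zify ring.
Set Implicit Arguments. Unset Strict Implicit. Unset Printing Implicit Defensive.
Import GRing.Theory.
Local Open Scope ring_scope.
Local Open Scope quotient_scope.

Local Notation "x %:F" := (FracField.tofrac x).

Lemma tofrac_repr (R : idomainType) (x : {fraction R}) :
  x * (repr x).2%:F = (repr x).1%:F.
Proof.
rewrite -{1}[x]reprK; set r := repr x; rewrite /FracField.tofrac -!lock.
change (FracField.mul (\pi_{fraction R} r) (\pi_{fraction R} (Ratio r.2 1))
        = \pi_{fraction R} (Ratio r.1 1)).
rewrite piE; apply/eqmodP; rewrite /= FracField.equivfE /FracField.mulf.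
rewrite !numden_Ratio ?mulf_neq0 ?denom_ratioP ?oner_eq0 //.
by rewrite !mulr1 mulrC.
Qed.

Lemma underdetermined_system (F : fieldType) (I J : finType) (a : J -> I -> F) :
  (#|J| < #|I|)%N ->
  exists2 u : I -> F, exists i, u i != 0 & forall j, \sum_i a j i * u i = 0.
Proof.
move=> ltJI; pose A : 'M_(#|I|, #|J|) := \matrix_(k, l) a (enum_val l) (enum_val k).
have : kermx A != 0.
  by rewrite -mxrank_eq0 mxrank_ker subn_eq0 -ltnNge (leq_ltn_trans (rank_leq_col A)).
case/rowV0Pn => v /sub_kermxP vA /rV0Pn [k vk].
exists (fun i => v 0 (enum_rank i)); first by exists (enum_val k); rewrite enum_valK.
move=> j; move/matrixP/(_ 0 (enum_rank j)): vA; rewrite !mxE => vAj.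
rewrite -[RHS]vAj (reindex (@enum_val I predT)) /=; last first.
  by exists enum_rank => i _; rewrite ?enum_valK ?enum_rankK.
by apply: eq_bigr => l _; rewrite mxE enum_rankK enum_valK mulrC.
Qed.

Section ShiftOperators.
Variables (F : fieldType) (rho : F).
Hypothesis rho_neq0 : rho != 0.

Definition rescale (i : nat) (p : {poly F}) : {poly F} := p \Po (rho ^+ i *: 'X).

Lemma size_rescale i p : size (rescale i p) = size p.
Proof. by rewrite size_comp_poly2 // size_scale ?size_polyX ?expf_neq0. Qed.

Lemma horner_rescale i p x : (rescale i p).[x] = p.[rho ^+ i * x].
Proof. by rewrite horner_comp hornerZ hornerX. Qed.

(* The operator sum_k L_k(y) S^k applied to g at n, where y acts as P n. *)
Definition op_eval (L : nat -> {poly F}) (B : nat) (P g : nat -> F) (n : nat) : F :=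
  \sum_(k < B) (L k).[P n] * g (n + k)%N.

Lemma op_eval_widen L B B' P g n : (B <= B')%N -> (forall k, (B <= k)%N -> L k = 0) ->
  op_eval L B' P g n = op_eval L B P g n.
Proof.
move=> leBB' L0; rewrite /op_eval.
rewrite [RHS](big_ord_widen B' (fun k => (L k).[P n] * g (n + k)%N) leBB') [RHS]big_mkcond.
by apply: eq_bigr => k _; case: ltnP => // /L0 ->; rewrite horner0 mul0r.
Qed.

Lemma op_eval_lincomb (I : finType) (u : I -> F) (L : I -> nat -> {poly F}) B P g n :
  op_eval (fun k => \sum_x u x *: L x k) B P g n = \sum_x u x * op_eval (L x) B P g n.
Proof.
rewrite /op_eval; under eq_bigr => k _ do rewrite horner_sum mulr_suml.
rewrite exchange_big; apply: eq_bigr => x _; rewrite mulr_sumr.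
by apply: eq_bigr => k _; rewrite hornerZ mulrA.
Qed.

Variables (d : nat) (A : nat -> {poly F}).

(* The coefficient of S^k in y^e S^i (sum_(j <= d) A_j(y) S^j), where S y = rho y S. *)
Definition shift_mul (i e k : nat) : {poly F} :=
  if (i <= k <= i + d)%N then 'X^e * rescale i (A (k - i)) else 0.

Lemma op_eval_shift_mul P g i e n : (forall n, P n.+1 = rho * P n) ->
  op_eval (shift_mul i e) (i + d.+1) P g n = P n ^+ e * op_eval A d.+1 P g (n + i).
Proof.
move=> P_step; have P_add j : P (n + j)%N = rho ^+ j * P n.
  by elim: j => [|j IH]; rewrite ?addn0 ?mul1r // addnS P_step IH exprS mulrA.
rewrite /op_eval big_split_ord /= big1 ?add0r => [|k _]; last first.
  by rewrite /shift_mul leqNgt ltn_ord horner0 mul0r.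
rewrite mulr_sumr; apply: eq_bigr => k _.
rewrite /shift_mul leq_addr leq_add2l -ltnS ltn_ord addKn.
by rewrite hornerM hornerXn horner_rescale -P_add mulrA addnA.
Qed.

Section Elimination.
Variable m' : nat.
Hypothesis A_d_neq0 : A d != 0.

(* The multiplier has S-degree < N and y-degree < D.  With these sizes every y^e S^i L has
   y-degree < m T, and the unknowns outnumber the conditions (card_unknowns_gt). *)
Let N := (m' * d).+1.
Let a := \max_(j < d.+1) size (A j).
Let T := (N * a)%N.
Let D := (m'.+1 * T - a).+1.

Let lam (u : 'I_N * 'I_D -> F) (k : nat) : {poly F} :=
  \sum_x u x *: shift_mul x.1 x.2 k.

Lemma size_shift_mul i e k : (size (shift_mul i e k) <= e + a)%N.
Proof.
rewrite /shift_mul; case: ifP => [/andP [_ le_k] | _]; last by rewrite size_poly0.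
apply: leq_trans (size_polyMleq _ _) _; rewrite size_polyXn size_rescale addSn leq_add2l.
have lt_ki : (k - i < d.+1)%N by rewrite ltnS leq_subLR.
exact: (leq_bigmax (Ordinal lt_ki)).
Qed.

Lemma coef_lam_high u k e : (m'.+1 * T <= e)%N -> (lam u k)`_e = 0.
Proof.
move=> le_e; rewrite coef_sum big1 // => x _.
rewrite coefZ nth_default ?mulr0 //; apply: leq_trans (size_shift_mul _ _ _) _.
have := ltn_ord x.2; have : (a <= T)%N by rewrite leq_pmull.
rewrite /D; lia.
Qed.

Lemma lam_high_order u k : (N + d <= k)%N -> lam u k = 0.
Proof.
move=> le_k; apply: big1 => x _; rewrite /shift_mul.
by have := ltn_ord x.1; case: ifP => [/andP [_ ?] ?|]; [lia | rewrite scaler0].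
Qed.

Lemma card_unknowns_gt : ((N + d) * (T * m') < N * D)%N.
Proof. by rewrite /D /T /N; nia. Qed.

Lemma exists_lam_support_dvdn :
  exists2 u, exists x, u x != 0 & forall k e, ~~ (m'.+1 %| e)%N -> (lam u k)`_e = 0.
Proof.
pose sys (j : 'I_(N + d) * ('I_T * 'I_m')) (x : 'I_N * 'I_D) :=
  (shift_mul x.1 x.2 j.1)`_(m'.+1 * j.2.1 + j.2.2.+1).
have [|u u_neq0 u_sol] := underdetermined_system sys.
  by rewrite !card_prod !card_ord card_unknowns_gt.
exists u => // k e m_ndvd_e.
have [lt_k | /lam_high_order -> //] := ltnP k (N + d); last by rewrite coef0.
have [lt_e | /coef_lam_high //] := ltnP e (m'.+1 * T).
have e_mod : (0 < e %% m'.+1)%N by rewrite lt0n.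
have lt_t : (e %/ m'.+1 < T)%N by rewrite ltn_divLR // mulnC.
have lt_r : ((e %% m'.+1).-1 < m')%N by have := ltn_pmod e (ltn0Sn m'); lia.
have -> : e = (m'.+1 * (e %/ m'.+1) + (e %% m'.+1).-1.+1)%N.
  by rewrite prednK // mulnC -divn_eq.
rewrite -[RHS](u_sol (Ordinal lt_k, (Ordinal lt_t, Ordinal lt_r))) coef_sum.
by apply: eq_bigr => x _; rewrite coefZ mulrC.
Qed.

Lemma lam_top u : (exists x, u x != 0) ->
  exists2 i0 : 'I_N, lam u (i0 + d) != 0 & forall k, (i0 + d < k)%N -> lam u k = 0.
Proof.
case=> x0 ux0; pose nz (i : 'I_N) := [exists e, u (i, e) != 0].
have nz_x0 : nz x0.1 by apply/existsP; exists x0.2; rewrite -surjective_pairing.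
case: (arg_maxnP (fun i : 'I_N => i : nat) nz_x0) => i0 /existsP [e0 ue0] i0_max.
have u_above (i : 'I_N) (e : 'I_D) : (i0 < i)%N -> u (i, e) = 0.
  move=> lt_i; apply/eqP; apply: contraTT lt_i => ne; rewrite -leqNgt.
  by apply: i0_max; apply/existsP; exists e.
have lam_above k : (i0 + d <= k)%N ->
    lam u k = \sum_(e < D) u (i0, e) *: shift_mul i0 e k.
  move=> le_k; have -> : lam u k = \sum_i \sum_e u (i, e) *: shift_mul i e k.
    by rewrite pair_bigA; apply: eq_bigr => -[].
  rewrite (bigD1 i0) //= [X in _ + X]big1 ?addr0 // => i ne_i; apply: big1 => e _.
  case: (ltngtP i i0) => [lt_i | /u_above -> | /val_inj eq_i].
  - by rewrite /shift_mul ifF ?scaler0 //; apply/negbTE; lia.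
  - by rewrite scale0r.
  - by rewrite eq_i eqxx in ne_i.
exists i0 => [|k lt_k]; last first.
  rewrite lam_above ?(ltnW lt_k) // big1 // => e _.
  by rewrite /shift_mul ifF ?scaler0 //; lia.
have -> : lam u (i0 + d) = \poly_(e < D) u (i0, inord e) * rescale i0 (A d).
  rewrite lam_above // poly_def mulr_suml; apply: eq_bigr => e _.
  by rewrite inord_val /shift_mul leq_addr leqnn addKn scalerAl.
rewrite mulf_neq0 //; last by rewrite -size_poly_eq0 size_rescale size_poly_eq0.
apply: contraNneq ue0 => /(congr1 (coefp e0)).
by rewrite /= coef_poly ltn_ord inord_val coef0 => ->.
Qed.

Lemma rescaled_recurrence :
  exists (d' : nat) (L : nat -> {poly F}),
  [/\ (d' <= m'.+1 * d)%N, L d' != 0,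
      forall k e, ~~ (m'.+1 %| e)%N -> (L k)`_e = 0 &
      forall P g, (forall n, P n.+1 = rho * P n) ->
        (forall n, op_eval A d.+1 P g n = 0) -> forall n, op_eval L d'.+1 P g n = 0].
Proof.
have [u u_neq0 u_supp] := exists_lam_support_dvdn.
have [i0 top_neq0 above0] := lam_top u_neq0.
exists (i0 + d)%N, (lam u); split => //.
  by have := ltn_ord i0; rewrite mulSn /N; lia.
move=> P g P_step rec n.
have le_top : ((i0 + d).+1 <= N + d)%N by rewrite -addSn leq_add2r.
rewrite -(op_eval_widen _ _ _ le_top above0) op_eval_lincomb big1 // => x _.
have le_x : (x.1 + d.+1 <= N + d)%N by rewrite addnS -addSn leq_add2r.
rewrite (op_eval_widen _ _ _ le_x) ?op_eval_shift_mul ?rec ?mulr0 // => k lt_k.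
by rewrite /shift_mul ifF //; lia.
Qed.

End Elimination.
End ShiftOperators.

Section SubstQ.
Variables (K : fieldType) (w : K).
Hypothesis w_neq0 : w != 0.

Definition substq_poly (p : {poly K}) : Kq K := (p \Po (w *: 'X))%:F.

Lemma substq_poly_eq0 p : (substq_poly p == 0) = (p == 0).
Proof. by rewrite tofrac_eq0 comp_poly2_eq0 // size_scale ?size_polyX. Qed.

Lemma substq_polyD : {morph substq_poly : p q / p + q}.
Proof. by move=> p q; rewrite /substq_poly comp_polyD tofracD. Qed.

Lemma substq_polyM : {morph substq_poly : p q / p * q}.
Proof. by move=> p q; rewrite /substq_poly comp_polyM tofracM. Qed.

Lemma substq_polyC a : substq_poly a%:P = (a%:P)%:F.
Proof. by rewrite /substq_poly comp_polyC. Qed.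

Lemma substq_frac (x : Kq K) (a b : {poly K}) : b != 0 -> x * b%:F = a%:F ->
  substq w x = substq_poly a / substq_poly b.
Proof.
move=> b_neq0 xb; have xr := tofrac_repr x.
have ar_rb : a * (repr x).2 = (repr x).1 * b.
  by apply/eqP; rewrite -tofrac_eq !tofracM -xb -xr mulrAC.
apply/eqP; rewrite eqr_div ?substq_poly_eq0 ?denom_ratioP //.
by rewrite -!substq_polyM ar_rb mulrC.
Qed.

Lemma substq_tofrac p : substq w p%:F = substq_poly p.
Proof.
by rewrite (@substq_frac _ p 1) ?oner_eq0 ?tofrac1 ?mulr1 // substq_polyC divr1.
Qed.

Lemma substqM : {morph substq w : x y / x * y}.
Proof.
move=> x y; have xr := tofrac_repr x; have yr := tofrac_repr y.
rewrite (@substq_frac (x * y) ((repr x).1 * (repr y).1) ((repr x).2 * (repr y).2)).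
- rewrite (substq_frac (denom_ratioP _) xr) (substq_frac (denom_ratioP _) yr).
  by rewrite !substq_polyM invfM mulrACA.
- by rewrite mulf_neq0 ?denom_ratioP.
- by rewrite !tofracM mulrACA xr yr.
Qed.

Lemma substqD : {morph substq w : x y / x + y}.
Proof.
move=> x y; have xr := tofrac_repr x; have yr := tofrac_repr y.
rewrite (@substq_frac (x + y) ((repr x).1 * (repr y).2 + (repr y).1 * (repr x).2)
  ((repr x).2 * (repr y).2)).
- rewrite (substq_frac (denom_ratioP _) xr) (substq_frac (denom_ratioP _) yr).
  by rewrite substq_polyD !substq_polyM addf_div ?substq_poly_eq0 ?denom_ratioP.
- by rewrite mulf_neq0 ?denom_ratioP.
- by rewrite !tofracM tofracD !tofracM mulrDl -xr -yr !mulrA [y * _ * _]mulrAC.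
Qed.

Lemma substqB : zmod_morphism (substq w).
Proof. by move=> x y; apply/eqP; rewrite eq_sym subr_eq -substqD subrK. Qed.

Lemma substq_monoid : monoid_morphism (substq w).
Proof.
split; last exact: substqM.
by rewrite -tofrac1 substq_tofrac /substq_poly comp_polyC tofrac1.
Qed.

HB.instance Definition _ := GRing.isZmodMorphism.Build _ _ (substq w) substqB.
HB.instance Definition _ := GRing.isMonoidMorphism.Build _ _ (substq w) substq_monoid.

Lemma substq_evalq c n :
  substq w (evalq c n) = (map_poly substq_poly c).[((w *: 'X) ^+ n)%:F].
Proof.
rewrite /evalq -horner_map -map_poly_comp; congr (_.[_]).
  by apply: eq_map_poly => p /=; apply: substq_tofrac.
by rewrite -[(w *: 'X) ^+ n]comp_Xn_poly; apply: substq_tofrac.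
Qed.

Lemma substq_rec (f : nat -> Kq K) (d : nat) (c : nat -> {poly {poly K}}) :
  (forall n, \sum_(j < d.+1) evalq (c j) n * f (n + j)%N = 0) ->
  forall n, op_eval (fun j => map_poly substq_poly (c j)) d.+1
    (fun n => (w *: 'X)%:F ^+ n) (fun n => substq w (f n)) n = 0.
Proof.
move=> rec n; rewrite -(rmorph0 (substq w)) -(rec n) rmorph_sum.
by apply: eq_bigr => j _; rewrite rmorphM /= substq_evalq tofracXn.
Qed.

End SubstQ.

Section ClearDenominators.
Variable R : idomainType.

Lemma poly_common_denominator (p : {poly {fraction R}}) :
  exists s c, s != 0 /\ map_poly (@FracField.tofrac R) c = s%:F *: p.
Proof.
elim/poly_ind: p => [|p x [s [c [s_neq0 c_p]]]].
  by exists 1, 0; rewrite oner_neq0 map_poly0 scaler0.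
have xr := tofrac_repr x.
exists (s * (repr x).2), (c * (repr x).2%:P * 'X + ((repr x).1 * s)%:P).
split; first by rewrite mulf_neq0 ?denom_ratioP.
rewrite rmorphD !rmorphM /= map_polyX !map_polyC /= c_p scalerDr scale_polyC.
congr (_ + _); last by rewrite -polyCM -xr; congr _%:P; ring.
by rewrite -!mul_polyC polyCM; ring.
Qed.

Lemma polys_common_denominator (B : nat) (L : nat -> {poly {fraction R}}) :
  exists s (c : nat -> {poly R}), s != 0 /\
    forall k, (k <= B)%N -> map_poly (@FracField.tofrac R) (c k) = s%:F *: L k.
Proof.
elim: B => [|B [s [c [s_neq0 c_L]]]].
  have [s [c [s_neq0 c_L]]] := poly_common_denominator (L 0%N).
  by exists s, (fun=> c); split => // k; rewrite leqn0 => /eqP ->.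
have [t [b [t_neq0 b_L]]] := poly_common_denominator (L B.+1).
exists (s * t), (fun k => if (k <= B)%N then c k * t%:P else b * s%:P).
split => [|k le_k]; first by rewrite mulf_neq0.
case: ifP => [le_kB | /negbT].
  by rewrite rmorphM /= map_polyC c_L // -!mul_polyC tofracM polyCM; ring.
rewrite -ltnNge => lt_Bk; have -> : k = B.+1 by apply/eqP; rewrite eqn_leq le_k.
by rewrite rmorphM /= map_polyC b_L -!mul_polyC tofracM polyCM; ring.
Qed.

End ClearDenominators.

Lemma horner_dvdn_support (R : comNzRingType) (m : nat) (p : {poly R}) x y :
  (forall e, ~~ (m %| e)%N -> p`_e = 0) -> x ^+ m = y ^+ m -> p.[x] = p.[y].
Proof.
move=> p_supp xy; rewrite !horner_coef; apply: eq_bigr => i _.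
case: (boolP (m %| i)%N) => [/dvdnP [k ->] | /p_supp ->]; last by rewrite !mul0r.
by rewrite mulnC !exprM xy.
Qed.

Lemma qrec_of_dvdn_support (K : fieldType) (m d : nat) (x : Kq K) (g : nat -> Kq K)
    (L : nat -> {poly Kq K}) :
  x ^+ m = ('X : {poly K})%:F ^+ m -> L d != 0 ->
  (forall k e, ~~ (m %| e)%N -> (L k)`_e = 0) ->
  (forall n, op_eval L d.+1 (fun n => x ^+ n) g n = 0) -> exists c, qrec g d c.
Proof.
move=> xm L_neq0 L_supp L_rec.
have [s [c [s_neq0 c_L]]] := polys_common_denominator d L.
exists c; split.
  apply: contraNneq L_neq0 => c0; have := c_L d (leqnn d).
  by rewrite c0 map_poly0 => /esym/eqP; rewrite scale_poly_eq0 tofrac_eq0 (negbTE s_neq0).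
move=> n; transitivity (s%:F * op_eval L d.+1 (fun n => x ^+ n) g n); last first.
  by rewrite L_rec mulr0.
rewrite /op_eval mulr_sumr; apply: eq_bigr => j _.
have le_j : (j <= d)%N by rewrite -ltnS.
rewrite /evalq (c_L _ le_j) hornerZ -mulrA; congr (_ * (_ * _)).
apply: horner_dvdn_support (L_supp j) _.
by rewrite tofracXn [LHS]exprAC -xm exprAC.
Qed.

Theorem corollary1 (K : fieldType)
  (charK0 : [pchar K] =i pred0)
  (roots_of_unity : forall k : nat, (0 < k)%N -> exists z : K, k.-primitive_root z)
  (f : nat -> Kq K) (d : nat) (c : nat -> {poly {poly K}})
  (hrec : qrec f d c)
  (m : nat) (w : K) (hm : (0 < m)%N) (hw : m.-primitive_root w) :
  q_holonomic (fun n => substq w (f n)) /\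
  exists (d' : nat) (c' : nat -> {poly {poly K}}),
    (d' <= m * d)%N /\ qrec (fun n => substq w (f n)) d' c'.
Proof.
case: hrec => c_d_neq0 rec.
have w_neq0 : w != 0.
  apply/eqP => w0; have := prim_expr_order hw.
  by rewrite w0 expr0n eqn0Ngt hm => /esym/eqP; rewrite oner_eq0.
pose A j := map_poly (substq_poly w) (c j).
have A_d_neq0 : A d != 0.
  rewrite -size_poly_eq0 size_map_poly_id0 ?size_poly_eq0 //.
  by rewrite substq_poly_eq0 // lead_coef_eq0.
pose rho : Kq K := (w *: 'X)%:F.
have rho_neq0 : rho != 0 by rewrite tofrac_eq0 scale_poly_eq0 negb_or w_neq0 polyX_eq0.
case: m hm hw => // m' _ hw.
have [d' [L [le_d' L_neq0 L_supp L_rec]]] := rescaled_recurrence rho_neq0 m' A_d_neq0.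
have rho_m : rho ^+ m'.+1 = ('X : {poly K})%:F ^+ m'.+1.
  by rewrite -!tofracXn exprZn (prim_expr_order hw) scale1r.
have [c' rec'] := qrec_of_dvdn_support rho_m L_neq0 L_supp
  (L_rec _ _ (exprS rho) (substq_rec w_neq0 rec)).
by split; [exists d', c' | exists d', c'].
Qed.
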